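(* Let $G$ and $G'$ be graphs on the same vertex set $V$ such that $G'$ is obtained from $G$ by a single swap, i.e. there are distinct vertices $a,b,c,d$ with $ab,cd\in E(G)$, $ac,bd\notin E(G)$, and $E(G')=(E(G)\setminus\{ab,cd\})\cup\{ac,bd\}$. Then $|\mu(G)-\mu(G')|\le 1$.
   Context: All graphs are finite and simple. For a graph $G=(V,E)$ on $n$ vertices, a fractional vertex cover is a function $f:V\to[0,\infty)$ with $f(u)+f(v)\ge 1$ for every edge $uv\in E$; $\tau^*(G)$ denotes the minimum of $\sum_{v\in V}f(v)$ over all fractional vertex covers. For $E'\subseteq E$ let $G-E'=(V,E\setminus E')$. Define $\mu(G)=\min\{|E'| : E'\subseteq E,\ \tau^*(G-E')<n/2\}$. *)

From HB Require Import structures.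
From mathcomp Require Import all_boot all_order all_algebra.
From mathcomp Require Import boolp classical_sets reals.
Set Implicit Arguments. Unset Strict Implicit. Unset Printing Implicit Defensive.
Import Order.TTheory GRing.Theory Num.Theory.
Local Open Scope ring_scope.

(* A graph on the vertex set T (a finType) is given by its edge set
   E : {set {set T}}; it is simple iff every edge is a 2-element subset. *)
Definition simple_graph (T : finType) (E : {set {set T}}) : Prop :=
  forall e, e \in E -> #|e| = 2%N.

Definition frac_cover (R : realType) (T : finType) (E : {set {set T}})
  (f : T -> R) : Prop :=
  (forall v, 0 <= f v) /\
  (forall u v, [set u; v] \in E -> 1 <= f u + f v).

Definition tau_star (R : realType) (T : finType) (E : {set {set T}}) : R :=
  inf (fun t : R => exists f : T -> R, frac_cover E f /\ t = \sum_(v : T) f v).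

(* mu(G) = min { |E'| : E' \subset E, tau*(G - E') < n/2 }.
   (Default #|E|.+1 if no such E' exists, which cannot happen when n >= 1.) *)
Definition mu (R : realType) (T : finType) (E : {set {set T}}) : nat :=
  \big[minn/#|E|.+1]_(E' : {set {set T}} |
      (E' \subset E) && `[< tau_star R (E :\: E') < (#|T|%:R / 2 : R) >])
    #|E'|.

From HB Require Import structures.
From mathcomp Require Import all_boot all_order all_algebra.
From mathcomp Require Import boolp classical_sets reals.
From mathcomp Require Import lra.
Import Order.TTheory GRing.Theory Num.Theory.

(* Take a removal set F of minimum size [mu G] and a fractional cover f of
   G - F of weight < n/2.  The same f covers the swapped graph minus
   (F \ {ab, cd}) plus those of the new edges ac, bd that f leaves uncovered.
   If both are uncovered then f(a) + f(b) + f(c) + f(d) < 2, so one of ab, cd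
   is uncovered as well, hence lies in F and is no longer needed: at most one
   edge is added.  The swap is undone by swapping back along ac, bd, which
   gives the other inequality. *)

Set Implicit Arguments. Unset Strict Implicit. Unset Printing Implicit Defensive.
Local Open Scope ring_scope.

Lemma geq_bigmin_cond (I : finType) (P : pred I) (F : I -> nat) x0 i0 :
  P i0 -> (\big[minn/x0]_(i | P i) F i <= F i0)%N.
Proof.
move=> Pi0; rewrite -big_filter.
have : i0 \in [seq i <- index_enum I | P i].
  by rewrite mem_filter Pi0 mem_index_enum.
elim: [seq i <- _ | _] => // i s IHs; rewrite in_cons big_cons.
by case/predU1P=> [<-|/IHs]; [exact: geq_minl | exact/leq_trans/geq_minr].
Qed.

Lemma eq_bigmin_cond (I : finType) (P : pred I) (F : I -> nat) x0 i0 :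
  P i0 -> (F i0 <= x0)%N -> exists2 i, P i & \big[minn/x0]_(j | P j) F j = F i.
Proof.
move=> Pi0 Fi0x0; case: (arg_minnP F Pi0) => i Pi Fi_min.
exists i => //; apply/eqP; rewrite eqn_leq geq_bigmin_cond //=.
apply: (big_ind (fun m => F i <= m)%N) => [|m n Fi_m Fi_n|j /Fi_min //].
- exact: leq_trans (Fi_min _ Pi0) Fi0x0.
- by rewrite leq_min Fi_m Fi_n.
Qed.

Section FractionalCovers.

Variables (R : realType) (T : finType).
Implicit Types (E F : {set {set T}}) (f : T -> R).

Lemma tau_star_le_weight E f : frac_cover E f -> tau_star R E <= \sum_v f v.
Proof.
move=> fE; apply: ge_inf; last by exists f.
by exists 0 => _ [g [[g_ge0 _] ->]]; exact: sumr_ge0.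
Qed.

Lemma tau_star_ltP E (r : R) :
  tau_star R E < r -> exists2 f, frac_cover E f & \sum_v f v < r.
Proof.
case/inf_lt => [|_ [f [fE ->]] lt_r]; last by exists f.
exists (\sum_(v : T) (1 : R)), (fun=> 1); split => //.
by split=> // u v _; rewrite lerDl.
Qed.

Lemma tau_star_set0 : tau_star R (finset.set0 : {set {set T}}) <= 0.
Proof.
apply: le_trans (tau_star_le_weight (f := fun=> 0) _) _; last by rewrite big1.
by split=> // u v; rewrite inE.
Qed.

Definition removal_set E F :=
  (F \subset E) && `[< tau_star R (E :\: F) < #|T|%:R / 2 >].

Lemma removal_setP E F :
  reflect (F \subset E /\ tau_star R (E :\: F) < #|T|%:R / 2) (removal_set E F).
Proof. by apply: (iffP andP) => -[FE /asboolP]. Qed.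

Lemma removal_set_full E : (0 < #|T|)%N -> removal_set E E.
Proof.
move=> T_gt0; apply/removal_setP; split => //.
by rewrite finset.setDv (le_lt_trans tau_star_set0) // divr_gt0 ?ltr0n.
Qed.

Lemma mu_le_card E F : removal_set E F -> (mu R E <= #|F|)%N.
Proof. exact: geq_bigmin_cond. Qed.

Lemma mu_attained E :
  (0 < #|T|)%N -> exists2 F, removal_set E F & mu R E = #|F|.
Proof.
by move=> T_gt0; apply: eq_bigmin_cond (removal_set_full E T_gt0) _.
Qed.

End FractionalCovers.

Lemma set2_eq (T : finType) (u v x y : T) :
  [set u; v] = [set x; y] -> (u = x /\ v = y) \/ (u = y /\ v = x).
Proof.
move=> uv_xy.
have /set2P xu : x \in [set u; v] by rewrite uv_xy set21.
have /set2P yu : y \in [set u; v] by rewrite uv_xy set22.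
have /set2P ux : u \in [set x; y] by rewrite -uv_xy set21.
have /set2P vx : v \in [set x; y] by rewrite -uv_xy set22.
by case: xu yu ux vx => -> [] -> [] ? [] ?; subst; auto.
Qed.

Lemma addr_set2 (V : nmodType) (T : finType) (g : T -> V) (u v x y : T) :
  [set u; v] = [set x; y] -> g u + g v = g x + g y.
Proof. by case/set2_eq=> -[-> ->]; last exact: addrC. Qed.

Section Swap.

Variables (R : realType) (T : finType).
Implicit Types (E F : {set {set T}}) (f : T -> R).

Definition swap_edges E (a b c d : T) :=
  (E :\: [set [set a; b]; [set c; d]]) :|: [set [set a; c]; [set b; d]].

Lemma swap_edgesK E (a b c d : T) :
  [set a; b] \in E -> [set c; d] \in E ->
  [set a; c] \notin E -> [set b; d] \notin E ->
  swap_edges (swap_edges E a b c d) a c b d = E.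
Proof.
move=> Eab Ecd Eac Ebd; apply/setP => e; rewrite !inE.
have [->|] := eqVneq e [set a; b]; rewrite ?Eab ?orbT //= => _.
have [->|] := eqVneq e [set c; d]; rewrite ?Ecd ?orbT //= => _.
have [->|] := eqVneq e [set a; c]; rewrite ?(negbTE Eac) //= => _.
by have [->|] := eqVneq e [set b; d]; rewrite ?(negbTE Ebd) ?orbF.
Qed.

Definition uncovered_edge f (x y : T) : {set {set T}} :=
  if f x + f y < 1 then [set [set x; y]] else finset.set0.

Lemma card_uncovered_edge f (x y : T) :
  #|uncovered_edge f x y| = (f x + f y < 1)%R :> nat.
Proof. by rewrite /uncovered_edge; case: ifP; rewrite ?cards1 ?cards0. Qed.

Definition swap_removal F f (a b c d : T) :=
  (F :\: [set [set a; b]; [set c; d]]) :|: uncovered_edge f a c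
    :|: uncovered_edge f b d.

Lemma uncovered_edge_notin f (x y : T) :
  [set x; y] \notin uncovered_edge f x y -> 1 <= f x + f y.
Proof. by rewrite /uncovered_edge; case: ltP => // _; rewrite inE eqxx. Qed.

Lemma uncovered_old_edge E F f (a b c d : T) :
  frac_cover (E :\: F) f -> [set a; b] \in E -> [set c; d] \in E ->
  f a + f c < 1 -> f b + f d < 1 -> ([set a; b] \in F) || ([set c; d] \in F).
Proof.
move=> [_ f_cov] Eab Ecd ac_lt bd_lt; apply/negPn/negP.
rewrite negb_or => /andP[Fab Fcd].
have : 1 <= f a + f b by apply: f_cov; rewrite inE Fab.
have : 1 <= f c + f d by apply: f_cov; rewrite inE Fcd.
lra.
Qed.

Lemma uncovered_edge_sub f (x y : T) :
  uncovered_edge f x y \subset [set [set x; y]].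
Proof. by rewrite /uncovered_edge; case: ifP; rewrite ?finset.sub0set. Qed.

Lemma swap_removal_sub E F f (a b c d : T) :
  F \subset E -> swap_removal F f a b c d \subset swap_edges E a b c d.
Proof.
move=> FE; rewrite /swap_removal /swap_edges -finset.setUA.
rewrite finset.setUSS ?finset.setSD // finset.subUset.
by rewrite !(fintype.subset_trans (uncovered_edge_sub _ _ _)) //
  finset.sub1set !inE eqxx ?orbT.
Qed.

Lemma card_swap_removal E F f (a b c d : T) :
  frac_cover (E :\: F) f -> [set a; b] \in E -> [set c; d] \in E ->
  (#|swap_removal F f a b c d| <= #|F|.+1)%N.
Proof.
move=> fEF Eab Ecd; set X := [set [set a; b]; [set c; d]].
have card_FX : (#|F :\: X| <= #|F|)%N.
  by rewrite subset_leq_card ?finset.subsetDl.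
have card_FX_lt : f a + f c < 1 -> f b + f d < 1 -> (#|F :\: X| < #|F|)%N.
  move=> ac_lt bd_lt.
  rewrite proper_card // finset.properEneq finset.subsetDl andbT.
  apply/negP => /eqP FX_F; have := uncovered_old_edge fEF Eab Ecd ac_lt bd_lt.
  by rewrite -FX_F !inE !eqxx ?orbT.
apply: leq_trans (leq_card_setU _ _) _.
apply: leq_trans (leq_add (leq_card_setU _ _) (leqnn _)) _.
rewrite !card_uncovered_edge -/X.
case ac_lt: (f a + f c < 1); case bd_lt: (f b + f d < 1).
- by rewrite !addn1 ltnS card_FX_lt.
- by rewrite addn0 addn1 ltnS.
- by rewrite addn0 addn1 ltnS.
- by rewrite !addn0 (leq_trans card_FX).
Qed.

Lemma swap_removal_cover E F f (a b c d : T) :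
  frac_cover (E :\: F) f ->
  frac_cover (swap_edges E a b c d :\: swap_removal F f a b c d) f.
Proof.
move=> [f_ge0 f_cov]; split=> // u v; rewrite !inE.
case/andP=> /norP[/norP[uv_FX uv_ac] uv_bd].
case/or3P=> [/andP[uv_X uv_E]|/eqP uv_eq|/eqP uv_eq].
- apply: f_cov; rewrite !inE uv_E andbT.
  by apply: contra uv_FX => ->; rewrite uv_X.
- by rewrite (addr_set2 f uv_eq) uncovered_edge_notin // -uv_eq.
- by rewrite (addr_set2 f uv_eq) uncovered_edge_notin // -uv_eq.
Qed.

Lemma mu_swap_le E (a b c d : T) :
  [set a; b] \in E -> [set c; d] \in E ->
  (mu R (swap_edges E a b c d) <= (mu R E).+1)%N.
Proof.
move=> Eab Ecd.
have T_gt0 : (0 < #|T|)%N by apply/fintype.card_gt0P; exists a.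
have [F /removal_setP[FE tauF] ->] := mu_attained R E T_gt0.
have [f fEF f_lt] := tau_star_ltP tauF.
apply: leq_trans (card_swap_removal fEF Eab Ecd).
apply: mu_le_card; apply/removal_setP; split; first exact: swap_removal_sub.
exact: le_lt_trans (tau_star_le_weight (swap_removal_cover _ _ _ _ fEF)) f_lt.
Qed.

End Swap.

Theorem lemma12 (R : realType) (T : finType) (E E' : {set {set T}})
  (a b c d : T) :
  simple_graph E ->
  uniq [:: a; b; c; d] ->
  [set a; b] \in E -> [set c; d] \in E ->
  [set a; c] \notin E -> [set b; d] \notin E ->
  E' = (E :\: [set [set a; b]; [set c; d]]) :|: [set [set a; c]; [set b; d]] ->
  (mu R E <= (mu R E').+1)%N /\ (mu R E' <= (mu R E).+1)%N.
Proof.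
move=> _ _ Eab Ecd Eac Ebd ->; split; last exact: mu_swap_le.
rewrite -{1}(swap_edgesK Eab Ecd Eac Ebd).
by apply: mu_swap_le; rewrite !inE eqxx ?orbT.
Qed.
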